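(* For $\mu\in\Lambda$ with dominant representative $\mu^+\in W\mu$, the following are equivalent: (1) $\langle\alpha^\vee,\mu\rangle\geqslant-1$ for every positive root $\alpha^\vee\in\Delta^\vee_+$; (2) for every dominant $\lambda'\in\Lambda^+$, the inequalities $\mu\leqslant\lambda'\leqslant\mu^+$ imply $\lambda'=\mu^+$.
   Context: $G$ connected reductive over $\mathbb C$ with maximal torus $T$ and Borel $B$; $\Lambda$ coweight lattice, $\Lambda^+$ dominant coweights, $W$ Weyl group, $\Delta^\vee_+$ positive roots, $\langle\cdot,\cdot\rangle$ the pairing; $\mu\leqslant\lambda$ means $\lambda-\mu$ is a nonnegative integer combination of simple coroots; $\mu^+$ denotes the unique dominant element of $W\mu$. *)

(* Abstract (reduced) root datum of rank n, realized on
   X^* = Z^n (characters, where the roots live) and Lambda = Z^n (coweights /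
   cocharacters, where the coroots live), with the standard pairing. *)
From HB Require Import structures.
From mathcomp Require Import all_boot all_order all_algebra.
Set Implicit Arguments. Unset Strict Implicit. Unset Printing Implicit Defensive.
Import Order.TTheory GRing.Theory Num.Theory.
Local Open Scope ring_scope.

Definition pair (n : nat) (x y : 'rV[int]_n) : int := \sum_(k < n) x 0 k * y 0 k.

Definition refl (n r : nat) (alpha alphav : 'I_r -> 'rV[int]_n) (i : 'I_r)
  (x : 'rV[int]_n) : 'rV[int]_n := x - pair x (alphav i) *: alpha i.
Definition reflv (n r : nat) (alpha alphav : 'I_r -> 'rV[int]_n) (i : 'I_r)
  (y : 'rV[int]_n) : 'rV[int]_n := y - pair (alpha i) y *: alphav i.

(* (X^*, Phi = {alpha i}, Lambda, Phi^v = {alphav i}) is a reduced root datum,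
   with alpha i |-> alphav i the bijection Phi -> Phi^v *)
Definition is_root_datum (n r : nat) (alpha alphav : 'I_r -> 'rV[int]_n) : Prop :=
  (injective alpha /\ injective alphav) /\ [/\
      (forall i, pair (alpha i) (alphav i) = 2),
      (forall i j, exists k, alpha k = refl alpha alphav i (alpha j)),
      (forall i j, exists k, alphav k = reflv alpha alphav i (alphav j))
    & (forall i j (c : int), alpha j = c *: alpha i -> c = 1 \/ c = -1)].

Definition is_base (n r : nat) (alpha : 'I_r -> 'rV[int]_n) (simple : pred 'I_r) : Prop :=
  (forall c : 'I_r -> int, \sum_(i | simple i) c i *: alpha i = 0 ->
     forall i, simple i -> c i = 0) /\
  (forall j, exists c : 'I_r -> int,
     alpha j = \sum_(i | simple i) c i *: alpha i /\
     ((forall i, simple i -> 0 <= c i) \/ (forall i, simple i -> c i <= 0))).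

Definition positive_root (n r : nat) (alpha : 'I_r -> 'rV[int]_n) (simple : pred 'I_r)
  (j : 'I_r) : Prop :=
  exists c : 'I_r -> int, alpha j = \sum_(i | simple i) c i *: alpha i /\
    (forall i, simple i -> 0 <= c i).

Definition dominant (n r : nat) (alpha : 'I_r -> 'rV[int]_n) (simple : pred 'I_r)
  (lam : 'rV[int]_n) : Prop :=
  forall i, simple i -> 0 <= pair (alpha i) lam.

Definition coweight_le (n r : nat) (alphav : 'I_r -> 'rV[int]_n) (simple : pred 'I_r)
  (mu lam : 'rV[int]_n) : Prop :=
  exists c : 'I_r -> nat, lam - mu = \sum_(i | simple i) alphav i *+ c i.

Definition in_W_orbit (n r : nat) (alpha alphav : 'I_r -> 'rV[int]_n)
  (mu nu : 'rV[int]_n) : Prop :=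
  exists s : seq 'I_r, nu = foldr (fun i x => reflv alpha alphav i x) mu s.

(* (1) => (2): from y = mu, apply simple reflections s_i with <alpha_i, y> = -1;
   y stays nearly dominant and below lam and grows, until it is dominant with
   the norm of mu+; it then equals mu+, hence so does lam.
   (2) => (1): if <alpha_j, mu> <= -2, raising mu + alpha_j^v to the dominant
   chamber gives a dominant lam with mu <= lam <= mu+ and B(lam, lam) smaller
   than B(mu+, mu+). *)

From HB Require Import structures.
From mathcomp Require Import all_boot all_order all_algebra.
From mathcomp Require Import ring zify.
From Stdlib Require Import ClassicalEpsilon.
Import Order.TTheory GRing.Theory Num.Theory.
Set Implicit Arguments. Unset Strict Implicit. Unset Printing Implicit Defensive.
Local Open Scope ring_scope.

Lemma pair_is_linear n (x : 'rV[int]_n) : linear_for *%R (pair x).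
Proof.
move=> c y z; rewrite /pair mulr_sumr -big_split; apply: eq_bigr => k _.
by rewrite !mxE mulrDr mulrCA.
Qed.
HB.instance Definition _ n x :=
  GRing.isLinear.Build int 'rV[int]_n int _ (@pair n x) (pair_is_linear x).

Section Pairing.
Variable n : nat.
Implicit Types x y z : 'rV[int]_n.

(* Both lattices are realized on Z^n, so the pairing is symmetric; this
   transports linearity to the character argument. *)
Lemma pairC x y : pair x y = pair y x.
Proof. by apply: eq_bigr => k _; rewrite mulrC. Qed.

Lemma pairDr x y z : pair x (y + z) = pair x y + pair x z.
Proof. exact: linearD. Qed.
Lemma pairZr (c : int) x y : pair x (c *: y) = c * pair x y.
Proof. exact: linearZ. Qed.
Lemma pairNr x y : pair x (- y) = - pair x y.
Proof. exact: linearN. Qed.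
Lemma pairBr x y z : pair x (y - z) = pair x y - pair x z.
Proof. exact: linearB. Qed.
Lemma pairMnr x y m : pair x (y *+ m) = pair x y *+ m.
Proof. exact: raddfMn. Qed.
Lemma pair_sumr (I : finType) (P : pred I) (F : I -> 'rV[int]_n) x :
  pair x (\sum_(i | P i) F i) = \sum_(i | P i) pair x (F i).
Proof. exact: linear_sum. Qed.

Lemma pairDl x y z : pair (x + y) z = pair x z + pair y z.
Proof. by rewrite !(pairC _ z) pairDr. Qed.
Lemma pairZl (c : int) x y : pair (c *: x) y = c * pair x y.
Proof. by rewrite !(pairC _ y) pairZr. Qed.
Lemma pairNl x y : pair (- x) y = - pair x y.
Proof. by rewrite !(pairC _ y) pairNr. Qed.
Lemma pairBl x y z : pair (x - y) z = pair x z - pair y z.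
Proof. by rewrite !(pairC _ z) pairBr. Qed.
Lemma pair_suml (I : finType) (P : pred I) (F : I -> 'rV[int]_n) y :
  pair (\sum_(i | P i) F i) y = \sum_(i | P i) pair (F i) y.
Proof. by rewrite pairC pair_sumr; apply: eq_bigr => i _; rewrite pairC. Qed.

Lemma pair_eq0 x : (forall y, pair x y = 0) -> x = 0.
Proof.
move=> x_perp; apply/rowP => k; rewrite mxE; have := x_perp (delta_mx 0 k).
rewrite /pair (bigD1 k) //= big1 ?addr0 => [|l lk]; first by rewrite mxE !eqxx mulr1.
by rewrite mxE (negbTE lk) andbF mulr0.
Qed.

End Pairing.

Section WeylActions.
Variables (n r : nat) (alpha alphav : 'I_r -> 'rV[int]_n).

Lemma refl_is_linear i : linear (refl alpha alphav i).
Proof.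
by move=> c x y; rewrite /refl pairDl pairZl scalerDl opprD addrACA scalerBr scalerA.
Qed.
Lemma reflv_is_linear i : linear (reflv alpha alphav i).
Proof.
by move=> c x y; rewrite /reflv pairDr pairZr scalerDl opprD addrACA scalerBr scalerA.
Qed.

Definition wact (w : seq 'I_r) y := foldr (fun i x => reflv alpha alphav i x) y w.
Definition wactc (w : seq 'I_r) x := foldr (fun i x => refl alpha alphav i x) x w.

Lemma wact_is_linear w : linear (wact w).
Proof.
elim: w => [//|i w IH] c x y /=.
by have /= -> := IH c x y; apply: reflv_is_linear.
Qed.
Lemma wactc_is_linear w : linear (wactc w).
Proof.
elim: w => [//|i w IH] c x y /=.
by have /= -> := IH c x y; apply: refl_is_linear.
Qed.

Definition form y z := \sum_(j < r) pair (alpha j) y * pair (alpha j) z.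
Definition phi y := \sum_(j < r) pair (alpha j) y *: alpha j.

Lemma form_is_linear y : linear_for *%R (form y).
Proof.
move=> c z t; rewrite /form mulr_sumr -big_split; apply: eq_bigr => j _.
by rewrite pairDr pairZr mulrDr mulrCA.
Qed.
Lemma phi_is_linear : linear phi.
Proof.
move=> c y z; rewrite /phi scaler_sumr -big_split; apply: eq_bigr => j _.
by rewrite pairDr pairZr scalerDl scalerA.
Qed.

End WeylActions.

HB.instance Definition _ n r alpha alphav i := GRing.isLinear.Build int 'rV[int]_n
  'rV[int]_n _ (@refl n r alpha alphav i) (refl_is_linear alpha alphav i).
HB.instance Definition _ n r alpha alphav i := GRing.isLinear.Build int 'rV[int]_n
  'rV[int]_n _ (@reflv n r alpha alphav i) (reflv_is_linear alpha alphav i).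
HB.instance Definition _ n r alpha alphav w := GRing.isLinear.Build int 'rV[int]_n
  'rV[int]_n _ (@wact n r alpha alphav w) (wact_is_linear alpha alphav w).
HB.instance Definition _ n r alpha alphav w := GRing.isLinear.Build int 'rV[int]_n
  'rV[int]_n _ (@wactc n r alpha alphav w) (wactc_is_linear alpha alphav w).
HB.instance Definition _ n r alpha y := GRing.isLinear.Build int 'rV[int]_n
  int _ (@form n r alpha y) (form_is_linear alpha y).
HB.instance Definition _ n r alpha := GRing.isLinear.Build int 'rV[int]_n
  'rV[int]_n _ (@phi n r alpha) (phi_is_linear alpha).

Lemma phiZ n r (alpha : 'I_r -> 'rV[int]_n) (c : int) y :
  phi alpha (c *: y) = c *: phi alpha y.
Proof. exact: linearZ. Qed.
Lemma phi_sum n r (alpha : 'I_r -> 'rV[int]_n) (I : finType) (P : pred I) F :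
  phi alpha (\sum_(i | P i) F i) = \sum_(i | P i) phi alpha (F i).
Proof. exact: linear_sum. Qed.

Section RootDatum.
Variables (n r : nat) (alpha alphav : 'I_r -> 'rV[int]_n) (simple : pred 'I_r).
Hypothesis hRD : is_root_datum alpha alphav.
Hypothesis hB : is_base alpha simple.
Implicit Types (x y z : 'rV[int]_n) (w : seq 'I_r).

Local Notation sc := (refl alpha alphav).
Local Notation sv := (reflv alpha alphav).
Local Notation B := (form alpha).

Lemma alpha_inj : injective alpha. Proof. by case: hRD => [[]]. Qed.
Lemma pair_root_coroot i : pair (alpha i) (alphav i) = 2.
Proof. by case: hRD => _ []. Qed.
Lemma root_reduced i j (c : int) : alpha j = c *: alpha i -> c = 1 \/ c = -1.
Proof. by case: hRD => _ [] _ _ _; apply. Qed.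
Lemma refl_root i j : exists k, alpha k = sc i (alpha j).
Proof. by case: hRD => _ []. Qed.
Lemma reflv_coroot i j : exists k, alphav k = sv i (alphav j).
Proof. by case: hRD => _ []. Qed.

Lemma pair_refl i x y : pair (sc i x) y = pair x (sv i y).
Proof. by rewrite /refl /reflv pairBl pairBr pairZl pairZr mulrC. Qed.

Lemma reflK i : involutive (sc i).
Proof.
move=> x; rewrite {1}/refl pairBl pairZl pair_root_coroot /refl -addrA -opprD -scalerDl.
set t := pair _ _; have -> : t + (t - t * 2) = 0 by ring.
by rewrite scale0r subr0.
Qed.
Lemma reflvK i : involutive (sv i).
Proof.
move=> y; rewrite {1}/reflv pairBr pairZr pair_root_coroot /reflv -addrA -opprD -scalerDl.
set t := pair _ _; have -> : t + (t - t * 2) = 0 by ring.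
by rewrite scale0r subr0.
Qed.
Lemma refl_root_self i : sc i (alpha i) = - alpha i.
Proof. by rewrite /refl pair_root_coroot -[X in X - _]scale1r -scalerBl scaleN1r. Qed.
Lemma reflv_coroot_self i : sv i (alphav i) = - alphav i.
Proof. by rewrite /reflv pair_root_coroot -[X in X - _]scale1r -scalerBl scaleN1r. Qed.

Definition rperm i j := odflt j [pick k | alpha k == sc i (alpha j)].

Lemma rpermE i j : alpha (rperm i j) = sc i (alpha j).
Proof.
rewrite /rperm; case: pickP => [k /eqP //| none]; exfalso.
by have [k Ek] := refl_root i j; have := none k; rewrite Ek eqxx.
Qed.
Lemma rpermK i : involutive (rperm i).
Proof. by move=> j; apply: alpha_inj; rewrite !rpermE reflK. Qed.
Lemma rperm_inj i : injective (rperm i).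
Proof. exact: inv_inj (rpermK i). Qed.
Lemma rperm_self i : alpha (rperm i i) = - alpha i.
Proof. by rewrite rpermE refl_root_self. Qed.

Lemma formC y z : B y z = B z y.
Proof. by apply: eq_bigr => j _; rewrite mulrC. Qed.
Lemma formDr x y z : B x (y + z) = B x y + B x z. Proof. exact: linearD. Qed.
Lemma formZr (c : int) x y : B x (c *: y) = c * B x y. Proof. exact: linearZ. Qed.
Lemma formBr x y z : B x (y - z) = B x y - B x z. Proof. exact: linearB. Qed.
Lemma formDl x y z : B (x + y) z = B x z + B y z.
Proof. by rewrite !(formC _ z) formDr. Qed.
Lemma formZl (c : int) x y : B (c *: x) y = c * B x y.
Proof. by rewrite !(formC _ y) formZr. Qed.
Lemma formBl x y z : B (x - y) z = B x z - B y z.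
Proof. by rewrite !(formC _ z) formBr. Qed.

Lemma form_ge0 y : 0 <= B y y.
Proof. by apply: sumr_ge0 => j _; rewrite -expr2 sqr_ge0. Qed.

(* The form is W-invariant, because s_i permutes the roots. *)
Lemma form_reflv i y z : B (sv i y) (sv i z) = B y z.
Proof.
rewrite /form; under eq_bigr do rewrite -!pair_refl -!rpermE.
by rewrite [RHS](reindex_inj (@rperm_inj i)).
Qed.

Definition cnorm i := B (alphav i) (alphav i).

Lemma cnorm_gt0 i : 0 < cnorm i.
Proof.
rewrite /cnorm /form (bigD1 i) //= pair_root_coroot ltr_wpDr //.
by apply: sumr_ge0 => j _; rewrite -expr2 sqr_ge0.
Qed.

(* Invariance under s_i expresses <alpha_i, y> through the form. *)
Lemma form_coroot i y : 2 * B (alphav i) y = pair (alpha i) y * cnorm i.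
Proof.
have := form_reflv i (alphav i) y.
rewrite reflv_coroot_self /reflv -scaleN1r formZl formBr formZr -/(cnorm i).
by move=> E; nia.
Qed.

Lemma pair_phi y z : pair (phi alpha y) z = B y z.
Proof. by rewrite /phi pair_suml; apply: eq_bigr => j _; rewrite pairZl. Qed.

Lemma phi_coroot i : 2 *: phi alpha (alphav i) = cnorm i *: alpha i.
Proof.
apply: subr0_eq; apply: pair_eq0 => z.
by rewrite pairBl !pairZl pair_phi form_coroot [X in _ - X]mulrC subrr.
Qed.

Lemma phi_reflv i y : phi alpha (sv i y) = sc i (phi alpha y).
Proof.
rewrite /phi; under eq_bigr do rewrite -pair_refl -rpermE.
rewrite (reindex_inj (@rperm_inj i)) /= linear_sum; apply: eq_bigr => j _.
by rewrite rpermK linearZ /= rpermE.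
Qed.

Lemma simple_indep (c : 'I_r -> int) :
  \sum_(i | simple i) c i *: alpha i = 0 -> forall i, simple i -> c i = 0.
Proof. by case: hB => indep _; apply: indep. Qed.

Lemma form_definite (c : 'I_r -> int) (x := \sum_(i | simple i) c i *: alphav i) :
  B x x = 0 -> forall i, simple i -> c i = 0.
Proof.
move=> /eqP; rewrite psumr_eq0 => [/allP x_perp|j _]; last by rewrite -expr2 sqr_ge0.
have phix0 : phi alpha x = 0.
  rewrite /phi big1 // => j _; move: (x_perp j (mem_index_enum j)).
  by rewrite implyTb mulf_eq0 orbb => /eqP ->; rewrite scale0r.
have : 2 *: phi alpha x = \sum_(i | simple i) (c i * cnorm i) *: alpha i.
  rewrite /x phi_sum scaler_sumr; apply: eq_bigr => i _.
  by rewrite phiZ scalerA [2 * _]mulrC -[(c i * 2) *: _]scalerA phi_coroot scalerA.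
rewrite phix0 scaler0 => /esym /simple_indep c_cnorm0 i si.
by have /eqP := c_cnorm0 i si; rewrite mulf_eq0 (gt_eqF (cnorm_gt0 i)) orbF => /eqP.
Qed.

Lemma scale_inj (c : int) x y : c != 0 -> c *: x = c *: y -> x = y.
Proof.
move=> c0 /rowP E; apply/rowP => k; have := E k; rewrite !mxE.
exact: mulfI.
Qed.

Lemma proportional_roots k m (a b : int) :
  0 < a -> 0 < b -> a *: alpha m = b *: alpha k -> m = k.
Proof.
move=> a_gt0 b_gt0 E.
have E1 : a * 2 = b * pair (alpha k) (alphav m).
  by have := congr1 (fun v => pair v (alphav m)) E; rewrite /= !pairZl pair_root_coroot.
have E2 : a * pair (alpha m) (alphav k) = b * 2.
  by have := congr1 (fun v => pair v (alphav k)) E; rewrite /= !pairZl pair_root_coroot.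
set t := pair (alpha k) (alphav m) in E1; set s := pair (alpha m) (alphav k) in E2.
have ab_neq0 : a * b != 0 by rewrite mulf_neq0 ?lt0r_neq0.
have ts4 : t * s = 4 by apply: (mulIf ab_neq0); nia.
have t_gt0 : 0 < t by nia.
have s_gt0 : 0 < s by move: ts4; rewrite -(pmulr_rgt0 _ t_gt0) => ->.
have : t = 2 \/ t = 1 \/ t = 4.
  have : t <= 4 by nia.
  have : t != 3 by apply/eqP => t3; move: ts4; rewrite t3; lia.
  lia.
case=> [t2|[t1|t4]]; [have ab : a = b | have a2 : a * 2 = b | have b2 : a = b * 2];
  try by move: E1; rewrite ?t1 ?t2 ?t4; lia.
- by apply: alpha_inj; apply: (scale_inj (lt0r_neq0 a_gt0)); rewrite E ab.
- have : alpha m = 2 *: alpha k.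
    by apply: (scale_inj (lt0r_neq0 a_gt0)); rewrite E -a2 scalerA mulrC.
  by case/root_reduced.
- have : alpha k = 2 *: alpha m.
    by apply: (scale_inj (lt0r_neq0 b_gt0)); rewrite -E b2 scalerA mulrC.
  by case/root_reduced.
Qed.

Lemma coroot_rperm i j : alphav (rperm i j) = sv i (alphav j).
Proof.
have [m Em] := reflv_coroot i j; rewrite -Em; congr alphav.
apply: (proportional_roots (cnorm_gt0 j) (cnorm_gt0 m)).
have := congr1 (sc i) (phi_coroot j).
by rewrite !linearZ /= -phi_reflv -Em phi_coroot rpermE => ->.
Qed.

Definition poscomb x := exists c : 'I_r -> int,
  x = \sum_(i | simple i) c i *: alpha i /\ (forall i, simple i -> 0 <= c i).

Lemma root_sign j : poscomb (alpha j) \/ poscomb (- alpha j).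
Proof.
case: hB => _ /(_ j) [c [Ej [c_ge0|c_le0]]]; [by left; exists c | right].
exists (fun i => - c i); split; last by move=> i /c_le0; rewrite oppr_ge0.
by rewrite Ej -sumrN; apply: eq_bigr => i _; rewrite scaleNr.
Qed.

Lemma simple_coef_uniq (c d : 'I_r -> int) :
  \sum_(i | simple i) c i *: alpha i = \sum_(i | simple i) d i *: alpha i ->
  forall i, simple i -> c i = d i.
Proof.
move=> E i si; apply/eqP; rewrite -subr_eq0; apply/eqP; move: i si; apply: simple_indep.
under eq_bigr do rewrite scalerBl.
by rewrite sumrB E subrr.
Qed.

Lemma poscomb_antisym x : poscomb x -> poscomb (- x) -> x = 0.
Proof.
move=> [c [Ec c_ge0]] [d [Ed d_ge0]].
have cd0 : forall i, simple i -> c i + d i = 0.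
  apply: simple_indep; under eq_bigr do rewrite scalerDl.
  by rewrite big_split /= -Ec -Ed subrr.
rewrite Ec big1 // => i si; move/eqP: (cd0 i si).
by rewrite paddr_eq0 ?c_ge0 ?d_ge0 // => /andP [/eqP -> _]; rewrite scale0r.
Qed.

Lemma root_not_both x : x != 0 -> poscomb x -> poscomb (- x) -> False.
Proof. by move=> /eqP x_neq0 pos_x neg_x; apply: x_neq0; apply: poscomb_antisym. Qed.

Lemma root_neq0 j : alpha j != 0.
Proof.
apply/eqP => Ej; have := pair_root_coroot j.
by rewrite Ej -(scale0r (0 : 'rV[int]_n)) pairZl mul0r.
Qed.

Lemma simple_poscomb i : simple i -> poscomb (alpha i).
Proof.
move=> si; exists (fun l => (l == i)%:R); split; last by move=> l _; case: (l == i).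
rewrite (bigD1 i) //= eqxx scale1r big1 ?addr0 // => l /andP [_ /negbTE ->].
by rewrite scale0r.
Qed.

Lemma sum_update (V : zmodType) (f g : 'I_r -> V) i : simple i ->
  (forall l, l != i -> g l = f l) ->
  \sum_(l | simple l) g l = \sum_(l | simple l) f l + (g i - f i).
Proof.
move=> si gf; rewrite (bigD1 i) // [in RHS](bigD1 i) //=.
rewrite (eq_bigr f) => [|l /andP [_ /gf] //].
by rewrite addrAC addrCA subrr addr0 addrC.
Qed.

Lemma refl_positive i j (c : 'I_r -> int) : simple i -> j != i ->
  alpha j = \sum_(l | simple l) c l *: alpha l -> (forall l, simple l -> 0 <= c l) ->
  let c' l := if l == i then c l + - pair (alpha j) (alphav i) else c l in
  sc i (alpha j) = \sum_(l | simple l) c' l *: alpha l /\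
  (forall l, simple l -> 0 <= c' l).
Proof.
move=> si ji Ej c_ge0 c'.
have Ec' : sc i (alpha j) = \sum_(l | simple l) c' l *: alpha l.
  rewrite (@sum_update _ (fun l => c l *: alpha l) _ i si) => [|l /negbTE li].
    by rewrite -Ej /c' eqxx scalerDl addrAC subrr add0r scaleNr.
  by rewrite /c' li.
split => //; case: (root_sign (rperm i j)); rewrite rpermE.
  by case=> d [Ed d_ge0] l sl; rewrite (simple_coef_uniq (d := d)) ?d_ge0 // -Ec'.
case=> d [Ed d_ge0]; exfalso.
have c'N : forall l, simple l -> c' l = - d l.
  apply: simple_coef_uniq; rewrite -Ec' -[LHS]opprK Ed -sumrN.
  by apply: eq_bigr => l _; rewrite scaleNr.
have c0 : forall l, simple l -> l != i -> c l = 0.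
  move=> l sl li; apply/eqP; rewrite eq_le c_ge0 // andbT.
  by have := c'N l sl; rewrite /c' (negbTE li) => ->; rewrite oppr_le0 d_ge0.
have Eji : alpha j = c i *: alpha i.
  rewrite Ej (bigD1 i) //= big1 ?addr0 // => l /andP [sl li].
  by rewrite c0 // scale0r.
case: (root_reduced Eji) => ci.
  by move: ji; rewrite (alpha_inj (_ : alpha j = alpha i)) ?eqxx // Eji ci scale1r.
by have := c_ge0 i si; rewrite ci.
Qed.

Lemma refl_positive_root i j : simple i -> positive_root alpha simple j -> j != i ->
  positive_root alpha simple (rperm i j) /\ rperm i j != i.
Proof.
move=> si [c [Ej c_ge0]] ji; have [E' c'_ge0] := refl_positive si ji Ej c_ge0.
split; first by rewrite /positive_root rpermE; eexists; split; [exact: E' | exact: c'_ge0].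
apply/eqP => ji'; have Eji : alpha j = - alpha i by rewrite -(rpermK i j) ji' rperm_self.
apply: (root_not_both (root_neq0 j)); first by exists c.
by rewrite Eji opprK; apply: simple_poscomb.
Qed.

Lemma poscomb_dominant x lam : poscomb x -> dominant alpha simple lam -> 0 <= pair x lam.
Proof.
move=> [c [-> c_ge0]] lam_dom; rewrite pair_suml; apply: sumr_ge0 => i si.
by rewrite pairZl mulr_ge0 ?c_ge0 ?lam_dom.
Qed.

Local Notation wact := (wact alpha alphav).
Local Notation wactc := (wactc alpha alphav).

Definition wperm w j := foldr (fun i k => rperm i k) j w.

Lemma wpermE w j : alpha (wperm w j) = wactc w (alpha j).
Proof. by elim: w => //= i w IH; rewrite rpermE IH. Qed.
Lemma coroot_wperm w j : alphav (wperm w j) = wact w (alphav j).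
Proof. by elim: w => //= i w IH; rewrite coroot_rperm IH. Qed.

Lemma pair_wact w x y : pair (wactc w x) (wact w y) = pair x y.
Proof. by elim: w => //= i w IH; rewrite pair_refl reflvK IH. Qed.
Lemma form_wact w y z : B (wact w y) (wact w z) = B y z.
Proof. by elim: w => //= i w IH; rewrite form_reflv IH. Qed.

Lemma wact_cat w1 w2 y : wact (w1 ++ w2) y = wact w1 (wact w2 y).
Proof. exact: foldr_cat. Qed.
Lemma wact_rcons w i y : wact (rcons w i) y = wact w (sv i y).
Proof. exact: foldr_rcons. Qed.
Lemma wactc_rcons w i x : wactc (rcons w i) x = wactc w (sc i x).
Proof. exact: foldr_rcons. Qed.
Lemma wact_rev w y : wact (rev w) (wact w y) = y.
Proof. by elim: w y => //= i w IH y; rewrite rev_cons wact_rcons reflvK IH. Qed.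

Lemma wact_conj w i j : wperm w i = j ->
  (forall y, sv j (wact w y) = wact w (sv i y)) /\
  (forall x, sc j (wactc w x) = wactc w (sc i x)).
Proof.
move=> <-; split=> [y|x].
  rewrite /reflv [wact w (_ - _)]linearB /= [wact w (_ *: _)]linearZ /=.
  by rewrite coroot_wperm wpermE pair_wact.
rewrite /refl [wactc w (_ - _)]linearB /= [wactc w (_ *: _)]linearZ /=.
by rewrite wpermE coroot_wperm pair_wact.
Qed.

Lemma exchange w i : all simple w -> simple i -> poscomb (- wactc w (alpha i)) ->
  exists v, [/\ all simple v, size w = (size v).+1,
    (forall y, wact w y = wact (rcons v i) y) &
    (forall x, wactc w x = wactc (rcons v i) x)].
Proof.
move=> + si; elim: w => [_ /= neg_i|j v IH /= /andP [sj sv] neg_jvi].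
  by case: (root_not_both (root_neq0 i) (simple_poscomb si) neg_i).
set x := wactc v (alpha i) in neg_jvi IH *.
case: (root_sign (wperm v i)) => [pos_vi|]; last first.
  rewrite wpermE -/x => /(IH sv) [v' [sv' size_v Ev Ec]].
  by exists (j :: v'); split; rewrite /= ?sj ?size_v // => z; rewrite ?Ev ?Ec.
have vij : wperm v i = j.
  apply/eqP/negPn/negP => vi_neq_j.
  have [pos_jvi _] := refl_positive_root sj pos_vi vi_neq_j.
  move: pos_jvi; rewrite /positive_root rpermE wpermE -/x => pos_jvi.
  by apply: (root_not_both _ pos_jvi neg_jvi); rewrite /x -wpermE -rpermE root_neq0.
have [conj_v conj_c] := wact_conj vij.
by exists v; split=> // z /=; rewrite ?conj_v ?conj_c ?wact_rcons ?wactc_rcons.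
Qed.

(* A word in simple reflections keeping every simple root positive acts
   trivially: deleting its last letter by the exchange condition shortens it. *)
Lemma positive_word_trivial w : all simple w ->
  (forall i, simple i -> poscomb (wactc w (alpha i))) -> forall y, wact w y = y.
Proof.
have [N] := ubnP (size w); elim: N w => // N IH; case/lastP => [//|v j].
rewrite size_rcons all_rcons => size_vj /andP [sj sv] w_pos.
have neg_vj : poscomb (- wactc v (alpha j)).
  by have := w_pos j sj; rewrite wactc_rcons refl_root_self linearN.
have [v' [sv' size_v Ev Ec]] := exchange sv sj neg_vj.
have Ec' x : wactc (rcons v j) x = wactc v' x by rewrite wactc_rcons Ec wactc_rcons reflK.
have Ev' y : wact (rcons v j) y = wact v' y by rewrite wact_rcons Ev wact_rcons reflvK.
move=> y; rewrite Ev'; apply: IH => // [|i si]; last by rewrite -Ec'; apply: w_pos.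
by move: size_vj; rewrite size_v; lia.
Qed.

Definition posb j : bool :=
  if excluded_middle_informative (positive_root alpha simple j) then true else false.

Lemma posbP j : reflect (positive_root alpha simple j) (posb j).
Proof. by rewrite /posb; case: excluded_middle_informative => ?; constructor. Qed.

Lemma dominant_unique w lam : all simple w -> dominant alpha simple lam ->
  dominant alpha simple (wact w lam) -> wact w lam = lam.
Proof.
have [N] := ubnP (size w); elim: N w => // N IH w size_w sw lam_dom wlam_dom.
have [all_pos|] := boolP [forall i, simple i ==> posb (wperm w i)].
  apply: positive_word_trivial => // i si; rewrite -wpermE; apply/posbP.
  by move/forallP/(_ i): all_pos; rewrite si.
rewrite negb_forall => /existsP [i]; rewrite negb_imply => /andP [si /posbP not_pos].
have neg_wi : poscomb (- wactc w (alpha i)).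
  by case: (root_sign (wperm w i)) => [/not_pos [] |]; rewrite wpermE.
have lam_i0 : pair (alpha i) lam = 0.
  apply/eqP; rewrite eq_le lam_dom // andbT -(pair_wact w) -oppr_ge0 -pairNl.
  exact: poscomb_dominant.
have [v [sv size_wv Ev _]] := exchange sw si neg_wi.
have Ewv : wact w lam = wact v lam by rewrite Ev wact_rcons /reflv lam_i0 scale0r subr0.
by rewrite Ewv IH // -?Ewv //; move: size_w; rewrite size_wv; lia.
Qed.

(* Some simple root pairs positively with the coroot of a positive root,
   since <alpha_j, alpha_j^v> = 2 > 0. *)
Lemma simple_pair_pos j : positive_root alpha simple j ->
  exists2 i, simple i & 0 < pair (alpha i) (alphav j).
Proof.
move=> [c [Ej c_ge0]].
have [/existsP [i /andP [si pos]]|] :=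
  boolP [exists i, simple i && (0 < pair (alpha i) (alphav j))]; first by exists i.
rewrite negb_exists => /forallP none; exfalso.
suff : pair (alpha j) (alphav j) <= 0 by rewrite pair_root_coroot.
rewrite Ej pair_suml; apply: sumr_le0 => i si; rewrite pairZl.
by apply: mulr_ge0_le0; rewrite ?c_ge0 // leNgt; move: (none i); rewrite si.
Qed.

Lemma pair_pos_sym i j : 0 < pair (alpha i) (alphav j) -> 0 < pair (alpha j) (alphav i).
Proof.
have E : pair (alpha i) (alphav j) * cnorm i = pair (alpha j) (alphav i) * cnorm j.
  by rewrite -!form_coroot formC.
by rewrite -(pmulr_lgt0 _ (cnorm_gt0 i)) E pmulr_lgt0 ?cnorm_gt0.
Qed.

(* Induction on positive roots: every positive root is reached from a
   simple root by simple reflections s_i increasing it; the induction runs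
   on the sum of the coefficients, which decreases under such an s_i. *)
Lemma positive_root_ind (P : 'I_r -> Prop) :
  (forall i, simple i -> P i) ->
  (forall i j, simple i -> 0 < pair (alpha i) (alphav j) -> P (rperm i j) -> P j) ->
  forall j, positive_root alpha simple j -> P j.
Proof.
move=> Psimple Pstep j [c [Ej c_ge0]].
have [N] : exists N : nat, \sum_(l | simple l) c l < N%:Z.
  exists (absz (\sum_(l | simple l) c l)).+1.
  by rewrite -addn1 PoszD gez0_abs ?ltrDl // sumr_ge0.
elim: N j c Ej c_ge0 => [|N IH] j c Ej c_ge0 sum_lt.
  by move: sum_lt; rewrite ltNge sumr_ge0.
have [sj|nsj] := boolP (simple j); first exact: Psimple.
have [i si pij] := simple_pair_pos (ex_intro _ c (conj Ej c_ge0)).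
have ji : j != i by apply: contraNneq nsj => ->.
have [Ek c'_ge0] := refl_positive si ji Ej c_ge0.
apply: (Pstep i j si pij); apply: IH (c'_ge0) _; first by rewrite rpermE.
rewrite (@sum_update _ c _ i si) => [|l /negbTE ->] //.
rewrite eqxx addrAC subrr add0r; move: sum_lt (pair_pos_sym pij).
by move: (\sum_(l | _) _) (pair _ _) => S p; lia.
Qed.

Lemma positive_coroot j : positive_root alpha simple j ->
  exists d : 'I_r -> nat, alphav j = \sum_(l | simple l) alphav l *+ d l.
Proof.
move: j; apply: positive_root_ind => [i si|i j si pij [d Ed]].
  exists (fun l => (l == i : nat)); rewrite (bigD1 i) //= eqxx big1 ?addr0 //.
  by move=> l /andP [_ /negbTE ->].
have [m Em] : exists m : nat, pair (alpha i) (alphav j) = m%:Z.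
  by exists (absz (pair (alpha i) (alphav j))); rewrite gez0_abs // ltW.
exists (fun l => if l == i then (d l + m)%N else d l).
rewrite (@sum_update _ (fun l => alphav l *+ d l) _ i si) => [|l /negbTE ->] //.
have pair_ik : pair (alpha i) (alphav (rperm i j)) = - m%:Z.
  by rewrite coroot_rperm -pair_refl refl_root_self pairNl Em.
rewrite eqxx mulrnDr addrAC subrr add0r -Ed -{1}(rpermK i j) coroot_rperm /reflv.
by rewrite pair_ik scaleNr opprK -natz scaler_nat.
Qed.

Lemma reflv_word j : exists w, all simple w /\ forall y, sv j y = wact w y.
Proof.
pose P j := exists w, all simple w /\ forall y, sv j y = wact w y.
have Ppos : forall j, positive_root alpha simple j -> P j.
  apply: positive_root_ind => [i si|i {}j si _ [w [sw Ew]]].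
    by exists [:: i]; rewrite /= si.
  have [conj_j _] := wact_conj (w := [:: i]) (rpermK i j).
  exists (i :: w ++ [:: i]); split; first by rewrite /= si all_cat sw /= si.
  by move=> y; rewrite -{1}(reflvK i y) conj_j /= Ew wact_cat.
case: (root_sign j) => [/Ppos //|neg_j].
have [w [sw Ew]] : P (rperm j j) by apply: Ppos; rewrite /positive_root rperm_self.
exists w; split => // y; rewrite -Ew /reflv coroot_rperm reflv_coroot_self rperm_self.
by rewrite pairNl scalerN scaleNr opprK.
Qed.

Lemma orbit_simple_word mu nu : in_W_orbit alpha alphav mu nu ->
  exists w, all simple w /\ nu = wact w mu.
Proof.
case=> s ->; elim: s => [|i s [w [sw Ew]]]; first by exists [::].
have [u [su Eu]] := reflv_word i.
by exists (u ++ w); rewrite all_cat su sw wact_cat -Ew -Eu.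
Qed.

Lemma form_orbit mu nu : in_W_orbit alpha alphav mu nu -> B nu nu = B mu mu.
Proof. by case=> s ->; rewrite form_wact. Qed.

Local Notation cle := (coweight_le alphav simple).

Lemma cle_refl y : cle y y.
Proof. by exists (fun _ => 0%N); rewrite subrr big1 // => l _; rewrite mulr0n. Qed.

Lemma cle_trans x y z : cle x y -> cle y z -> cle x z.
Proof.
move=> [d1 E1] [d2 E2]; exists (fun l => (d2 l + d1 l)%N).
rewrite -[z - x](subrKA y) E1 E2 -big_split /=.
by apply: eq_bigr => l _; rewrite mulrnDr.
Qed.

Lemma cle_add_coroot y j m : positive_root alpha simple j -> cle y (y + alphav j *+ m).
Proof.
move=> /positive_coroot [d Ed]; exists (fun l => (d l * m)%N).
rewrite addrAC subrr add0r Ed -sumrMnl; apply: eq_bigr => l _.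
by rewrite mulrnA.
Qed.

Definition height y := \sum_(j | posb j) pair (alpha j) y.

(* s_i permutes the positive roots other than alpha_i and negates alpha_i. *)
Lemma height_reflv i y : simple i -> height (sv i y) = height y - 2 * pair (alpha i) y.
Proof.
move=> si; have pos_i : posb i by apply/posbP/simple_poscomb.
rewrite /height; under eq_bigr do rewrite -pair_refl -rpermE.
rewrite (bigD1 i) //= [in RHS](bigD1 i) //= rperm_self pairNl.
have -> : \sum_(j | posb j && (j != i)) pair (alpha (rperm i j)) y =
          \sum_(j | posb j && (j != i)) pair (alpha j) y.
  rewrite [RHS](reindex_inj (@rperm_inj i)) /=; apply: eq_bigl => j.
  apply/andP/andP => -[/posbP pos_j ji].
    by have [/posbP ? ?] := refl_positive_root si pos_j ji.
  by have := refl_positive_root si pos_j ji; rewrite rpermK => -[/posbP].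
set S := \sum_(j | _) _; ring.
Qed.

(* The height is bounded on an orbit, as <a, y> <= <a, y>^2 <= B(y, y). *)
Lemma height_le y : height y <= B y y *+ r.
Proof.
rewrite /height big_mkcond /=.
apply: (@le_trans _ _ (\sum_(j < r) B y y)); last by rewrite sumr_const card_ord.
apply: ler_sum => j _; case: (posb j); last exact: form_ge0.
have le_sq : pair (alpha j) y <= pair (alpha j) y * pair (alpha j) y by nia.
apply: (le_trans le_sq); rewrite /form (bigD1 j) //= lerDl.
by apply: sumr_ge0 => k _; rewrite -expr2 sqr_ge0.
Qed.

Lemma dominant_or_neg y :
  dominant alpha simple y \/ exists2 i, simple i & pair (alpha i) y < 0.
Proof.
have [/forallP dom|] := boolP [forall i, simple i ==> (0 <= pair (alpha i) y)].
  by left => i si; move/implyP: (dom i); apply.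
rewrite negb_forall => /existsP [i]; rewrite negb_imply -ltNge => /andP [si neg].
by right; exists i.
Qed.

(* Every coweight is raised to a dominant one by simple reflections: each
   s_i with <alpha_i, y> < 0 adds a multiple of alpha_i^v, and increases the
   height, which is bounded on the orbit. *)
Lemma raise_dominant y :
  exists u, [/\ all simple u, dominant alpha simple (wact u y) & cle y (wact u y)].
Proof.
have [N] : exists N : nat, B y y *+ r - height y < N%:Z.
  exists (absz (B y y *+ r - height y)).+1.
  by rewrite -addn1 PoszD gez0_abs ?ltrDl // subr_ge0 height_le.
elim: N y => [|N IH] y bound.
  by move: bound; rewrite ltNge subr_ge0 height_le.
have [dom|[i si neg]] := dominant_or_neg y.
  by exists [::]; split=> //; apply: cle_refl.
have [m Em] : exists m : nat, - pair (alpha i) y = m%:Z.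
  by exists (absz (- pair (alpha i) y)); rewrite gez0_abs // oppr_ge0 ltW.
have Ey : sv i y = y + alphav i *+ m by rewrite /reflv -scaleNr Em -natz scaler_nat.
have [u [su dom_u le_u]] : exists u, [/\ all simple u,
    dominant alpha simple (wact u (sv i y)) & cle (sv i y) (wact u (sv i y))].
  apply: IH; rewrite form_reflv height_reflv //.
  by move: bound neg; move: (B y y *+ r) (height y) (pair _ _) => a b p; lia.
exists (u ++ [:: i]); rewrite all_cat su /= si wact_cat; split => //.
by apply: cle_trans le_u; rewrite Ey; apply/cle_add_coroot/simple_poscomb.
Qed.

Lemma sum_two (F : 'I_r -> 'rV[int]_n) (a b : int) i l : simple i -> simple l ->
  \sum_(k | simple k) (a * (k == i)%:R + b * (k == l)%:R) *: F k = a *: F i + b *: F l.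
Proof.
have sum_delta j : simple j -> \sum_(k | simple k) (k == j)%:R *: F k = F j.
  move=> sj; rewrite (bigD1 j) //= eqxx scale1r big1 ?addr0 // => k /andP [_ /negbTE ->].
  by rewrite scale0r.
move=> si sl; under eq_bigr do rewrite scalerDl -!scalerA.
by rewrite big_split /= -!scaler_sumr !sum_delta.
Qed.

(* For distinct simple roots, alpha_i - alpha_l is not a root: its
   coefficients have both signs. *)
Lemma simple_diff_not_root i l k : simple i -> simple l -> i != l ->
  alpha k != alpha i - alpha l.
Proof.
move=> si sl il; apply/eqP => Ek.
have Ediff (a : int) : a *: alpha k =
    \sum_(m | simple m) (a * (m == i)%:R + (- a) * (m == l)%:R) *: alpha m.
  by rewrite sum_two // Ek scalerBr scaleNr.
case: (root_sign k) => [[c [Ec c_ge0]]|[c [Ec c_ge0]]].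
  have := simple_coef_uniq (etrans (esym Ec) (etrans (esym (scale1r _)) (Ediff 1))) sl.
  by rewrite eq_sym (negbTE il) eqxx => cl; move: (c_ge0 l sl); rewrite cl.
have := simple_coef_uniq (etrans (esym Ec) (etrans (esym (scaleN1r _)) (Ediff (-1)))) si.
by rewrite (negbTE il) eqxx => ci; move: (c_ge0 i si); rewrite ci.
Qed.

(* For distinct simple roots the product of the two Cartan integers is < 4:
   the form is definite on x = 2 alpha_i^v - <alpha_l, alpha_i^v> alpha_l^v,
   and B(x, x) = |alpha_i^v|^2 (4 - product). *)
Lemma cartan_product_lt4 i l : simple i -> simple l -> i != l ->
  pair (alpha i) (alphav l) * pair (alpha l) (alphav i) < 4.
Proof.
move=> si sl il; set a := pair (alpha i) (alphav l); set b := pair (alpha l) (alphav i).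
pose x := 2 *: alphav i - b *: alphav l.
have Bil : 2 * B (alphav i) (alphav l) = a * cnorm i by rewrite form_coroot.
have Bli : b * cnorm l = a * cnorm i by rewrite -form_coroot formC form_coroot.
have Bxx : B x x = cnorm i * (4 - a * b).
  rewrite /x formBl !formBr !formZl !formZr -/(cnorm i) -/(cnorm l) (formC (alphav l)).
  by rewrite [2 * (b * _)]mulrCA Bil Bli; ring.
have Bxx_neq0 : B x x != 0.
  apply/eqP; rewrite (_ : x = \sum_(k | simple k)
      (2 * (k == i)%:R + (- b) * (k == l)%:R) *: alphav k); last first.
    by rewrite sum_two // scaleNr.
  by move/form_definite/(_ i si); rewrite eqxx (negbTE il) mulr0 addr0.
move: (form_ge0 x) Bxx_neq0; rewrite Bxx pmulr_rge0 ?cnorm_gt0 // mulf_eq0.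
by rewrite (gt_eqF (cnorm_gt0 i)) /=; lia.
Qed.

Lemma cartan_offdiag i l : simple i -> simple l -> i != l -> pair (alpha i) (alphav l) <= 0.
Proof.
move=> si sl il; rewrite leNgt; apply/negP => a_gt0.
have b_gt0 := pair_pos_sym a_gt0.
have : pair (alpha i) (alphav l) = 1 \/ pair (alpha l) (alphav i) = 1.
  by move: (cartan_product_lt4 si sl il) a_gt0 b_gt0; nia.
case=> [a1|b1].
  by move: (simple_diff_not_root (rperm l i) si sl il); rewrite rpermE /refl a1 scale1r eqxx.
have li : l != i by rewrite eq_sym.
by move: (simple_diff_not_root (rperm i l) sl si li); rewrite rpermE /refl b1 scale1r eqxx.
Qed.

Lemma natsum_scale (F : 'I_r -> 'rV[int]_n) (c : 'I_r -> nat) :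
  \sum_(l | simple l) F l *+ c l = \sum_(l | simple l) (c l)%:Z *: F l.
Proof. by apply: eq_bigr => l _; rewrite -natz scaler_nat. Qed.

(* The dominance order is antisymmetric, by independence of the simple
   coroots (definiteness of the form). *)
Lemma cle_antisym x y : cle x y -> cle y x -> x = y.
Proof.
move=> [c Ec] [d Ed].
have cd0 : forall l, simple l -> (c l + d l)%:Z = 0.
  apply: form_definite; rewrite (_ : \sum_(l | _) _ = 0) ?linear0 //.
  under eq_bigr do rewrite PoszD scalerDl.
  by rewrite big_split /= -!natsum_scale -Ec -Ed addrC subrKA subrr.
apply/eqP; rewrite -subr_eq0 Ed big1 // => l sl.
have /eqP := cd0 l sl; rewrite -[0]/(Posz 0) eqz_nat addn_eq0 => /andP [_ /eqP ->].
by rewrite mulr0n.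
Qed.

(* A dominant coweight is strictly shorter than anything strictly above it,
   as B(y, beta) >= 0 for y dominant and beta >= 0. *)
Lemma dominant_form_eq y z : dominant alpha simple y -> cle y z -> B z z = B y y -> z = y.
Proof.
move=> y_dom [d Ed] Bzy; pose beta := \sum_(l | simple l) (d l)%:Z *: alphav l.
have Ez : z = y + beta by rewrite /beta -natsum_scale -Ed addrC subrK.
have Byb : 0 <= B y beta.
  rewrite /beta linear_sum /=; apply: sumr_ge0 => l sl; rewrite formZr formC mulr_ge0 //.
  by rewrite -(pmulr_rge0 _ (ltr0Sn _ 1)) form_coroot mulr_ge0 ?y_dom // ltW ?cnorm_gt0.
have Bbb : B beta beta = 0.
  apply/eqP; rewrite eq_le form_ge0 andbT; move: Bzy.
  rewrite Ez formDl !formDr (formC beta y) => /eqP; rewrite -subr_eq0 => /eqP.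
  by move: Byb (form_ge0 beta); move: (B y y) (B y beta) (B beta beta) => a b c; lia.
rewrite Ez /beta big1 ?addr0 // => l sl.
by rewrite (form_definite Bbb sl) scale0r.
Qed.

Definition nearly_dominant y :=
  forall j, positive_root alpha simple j -> -1 <= pair (alpha j) y.

(* s_i preserves (1) when <alpha_i, y> = -1, as it permutes the other
   positive roots. *)
Lemma nearly_dominant_reflv i y : simple i -> nearly_dominant y ->
  pair (alpha i) y = -1 -> nearly_dominant (sv i y).
Proof.
move=> si y_nd yi j pos_j; rewrite -pair_refl -rpermE.
have [->|ji] := eqVneq j i; first by rewrite rperm_self pairNl yi opprK.
by apply: y_nd; have [] := refl_positive_root si pos_j ji.
Qed.

(* If <alpha_i, lam - y> > 0 then alpha_i^v occurs in lam - y, since the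
   other simple coroots pair nonpositively with alpha_i. *)
Lemma cle_coef_pos y lam i (c : 'I_r -> nat) : simple i ->
  lam - y = \sum_(l | simple l) alphav l *+ c l -> 0 < pair (alpha i) (lam - y) ->
  (0 < c i)%N.
Proof.
move=> si Ec; rewrite lt0n; apply: contraTneq => ci0.
rewrite -leNgt Ec pair_sumr; apply: sumr_le0 => l sl; rewrite pairMnr.
have [->|li] := eqVneq l i; first by rewrite ci0 mulr0n.
by rewrite mulrn_wle0 // cartan_offdiag // eq_sym.
Qed.

(* Direction (1) => (2), by induction on the size of lam - y: a dominant y
   between mu and lam has the norm of mu+, hence equals mu+; otherwise some
   <alpha_i, y> = -1 and s_i y = y + alpha_i^v is still between them. *)
Lemma nearly_dominant_saturated lam mup : dominant alpha simple lam -> cle lam mup ->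
  forall y, nearly_dominant y -> cle y lam -> B y y = B mup mup -> lam = mup.
Proof.
move=> lam_dom lam_le y y_nd [c Ec]; have [N] := ubnP (\sum_(l | simple l) c l).
elim: N y c y_nd Ec => // N IH y c y_nd Ec size_c Bmup.
have [y_dom|[i si yi_neg]] := dominant_or_neg y.
  have mup_y : mup = y.
    by apply: dominant_form_eq => //; apply: (cle_trans _ lam_le); exists c.
  by apply: cle_antisym => //; rewrite mup_y; exists c.
have yi : pair (alpha i) y = -1 by move: (y_nd i (simple_poscomb si)) yi_neg; lia.
have /prednK ci : (0 < c i)%N.
  by apply: (cle_coef_pos si Ec); rewrite pairBr yi; move: (lam_dom i si); lia.
pose c' l := if l == i then (c l).-1 else c l.
have Ec' : lam - sv i y = \sum_(l | simple l) alphav l *+ c' l.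
  rewrite /reflv yi scaleN1r opprK opprD addrA Ec.
  rewrite (@sum_update _ (fun l => alphav l *+ c' l) _ i si) => [|l /negbTE li].
    by rewrite /c' eqxx -{1}ci mulrS !addrK.
  by rewrite /c' li.
apply: (IH _ c' (nearly_dominant_reflv si y_nd yi) Ec'); last by rewrite form_reflv.
suff sum_c : (\sum_(l | simple l) c l = (\sum_(l | simple l) c' l).+1)%N.
  by move: size_c; rewrite sum_c.
rewrite (bigD1 i) // [in RHS](bigD1 i) //= /c' eqxx -{1}ci addSn.
by congr (_ + _).+1; apply: eq_bigr => l /andP [_ /negbTE ->].
Qed.

Lemma form_add_coroot y j :
  B (y + alphav j) (y + alphav j) = B y y + cnorm j * (pair (alpha j) y + 1).
Proof.
rewrite formDl !formDr (formC y) -/(cnorm j).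
by have := form_coroot j y; move: (B _ y) (pair _ _) => b p; nia.
Qed.

Section Orbit.
Variables mu mup : 'rV[int]_n.
Hypothesis mup_orbit : in_W_orbit alpha alphav mu mup.
Hypothesis mup_dom : dominant alpha simple mup.

Lemma orbit_le_dominant w : all simple w -> cle (wact w mu) mup.
Proof.
move=> sw; have [u [su u_dom u_le]] := raise_dominant (wact w mu).
have [w0 [sw0 Emup]] := orbit_simple_word mup_orbit.
suff <- : wact u (wact w mu) = mup by [].
have E : wact u (wact w mu) = wact (u ++ w ++ rev w0) mup.
  by rewrite !wact_cat Emup wact_rev.
rewrite E; apply: dominant_unique => //; last by rewrite -E.
by rewrite !all_cat su sw all_rev sw0.
Qed.

(* If <alpha_j, mu> <= -1, then mu + alpha_j^v, moved by any word in simple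
   reflections, also lies below mu+: it lies below u s_j mu or below u mu,
   according to the sign of the root u(alpha_j). *)
Lemma shifted_orbit_le u j : all simple u -> pair (alpha j) mu <= -1 ->
  cle (wact u (mu + alphav j)) mup.
Proof.
move=> su muj; set k := wperm u j.
have El : wact u (mu + alphav j) = wact u mu + alphav k by rewrite linearD /= coroot_wperm.
case: (root_sign k) => [pos_k|neg_k].
  have [g [sg Eg]] := reflv_word j.
  apply: cle_trans (orbit_le_dominant (w := u ++ g) _); last by rewrite all_cat su sg.
  have [m Em] : exists m : nat, - pair (alpha j) mu - 1 = m%:Z.
    by exists (absz (- pair (alpha j) mu - 1)); rewrite gez0_abs //; lia.
  suff -> : wact (u ++ g) mu = wact u (mu + alphav j) + alphav k *+ m.
    exact: cle_add_coroot.
  rewrite wact_cat -Eg El /reflv [wact u (_ - _)]linearB /= [wact u (_ *: _)]linearZ /=.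
  rewrite -coroot_wperm -/k -addrA -mulrS -scaler_nat natz -scaleNr.
  by congr (_ + _ *: _); lia.
apply: cle_trans (orbit_le_dominant su).
have pos_kk : positive_root alpha simple (rperm k k) by rewrite /positive_root rperm_self.
have -> : wact u mu = wact u (mu + alphav j) + alphav (rperm k k) *+ 1.
  by rewrite El coroot_rperm reflv_coroot_self mulr1n addrK.
exact: cle_add_coroot.
Qed.

(* Direction (2) => (1): if <alpha_j, mu> <= -2, raising mu + alpha_j^v to
   the dominant chamber gives a dominant lam with mu <= lam <= mu+ which is
   shorter than mu+. *)
Lemma saturated_nearly_dominant :
  (forall lam, dominant alpha simple lam -> cle mu lam -> cle lam mup -> lam = mup) ->
  nearly_dominant mu.
Proof.
move=> saturated j pos_j; rewrite leNgt; apply/negP => muj.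
have [u [su lam_dom le_lam]] := raise_dominant (mu + alphav j).
have mu_le : cle mu (wact u (mu + alphav j)).
  by apply: cle_trans le_lam; rewrite -[alphav j]mulr1n; apply: cle_add_coroot.
have lam_le := shifted_orbit_le su (ltW muj).
have := form_orbit mup_orbit; rewrite -(saturated _ lam_dom mu_le lam_le).
rewrite form_wact form_add_coroot.
by move: (cnorm_gt0 j) muj; move: (cnorm j) (pair _ _) (B mu mu) => N p b; nia.
Qed.

End Orbit.
End RootDatum.

Theorem mainTheorem19 (n r : nat) (alpha alphav : 'I_r -> 'rV[int]_n)
  (simple : pred 'I_r)
  (hRD : is_root_datum alpha alphav) (hB : is_base alpha simple)
  (mu mup : 'rV[int]_n)
  (hmup_orb : in_W_orbit alpha alphav mu mup)
  (hmup_dom : dominant alpha simple mup) :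
  (forall j, positive_root alpha simple j -> -1 <= pair (alpha j) mu) <->
  (forall lam : 'rV[int]_n, dominant alpha simple lam ->
     coweight_le alphav simple mu lam -> coweight_le alphav simple lam mup ->
     lam = mup).
Proof.
split=> [mu_nd lam lam_dom mu_le lam_le | saturated].
  apply: (nearly_dominant_saturated hRD hB lam_dom lam_le mu_nd mu_le).
  by rewrite (form_orbit hRD hmup_orb).
exact: (saturated_nearly_dominant hRD hB hmup_orb hmup_dom saturated).
Qed.
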